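(* Let $G$ be a discrete group, $\mathfrak g$ a finite string of elements of $G$, $\mathcal E$ a finite partition of $G$, $\ell=|Con(\mathfrak g,\mathcal E)|$, and let $(B-A)X=0$ be a subsystem of $Eq(\mathfrak g,\mathcal E)$ consisting of $p$ equations $A_tX=B_tX$ ($A,B$ the $p\times\ell$ $(0,1)$-matrices with rows $A_t,B_t$). Suppose that $\sum_{t=1}^p(B_t-A_t)=(1,1,\dots,1)$ and that there is a $p\times p$ permutation matrix $P$, corresponding to a permutation $\pi$ of $\{1,\dots,p\}$ (so that row $i$ of $PM$ is row $\pi(i)$ of $M$), such that the first $p-1$ rows of $PB-P^+A$ have nonnegative entries. Then $\tau(G)\le 1+|A_{\pi(1)}|+\ell$, where $|A_{\pi(1)}|$ denotes the number of entries equal to $1$ in the row $A_{\pi(1)}$.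
   Context: Configurations: for $\mathfrak g=(g_1,\dots,g_n)$ and a partition $\mathcal E=\{E_1,\dots,E_m\}$ of $G$, a configuration is $C=(c_0,\dots,c_n)\in\{1,\dots,m\}^{n+1}$ such that some $x\in G$ has $x\in E_{c_0}$ and $g_ix\in E_{c_i}$ ($1\le i\le n$); $Con(\mathfrak g,\mathcal E)=\{C_1,\dots,C_\ell\}$ is the set of configurations. The configuration equations $Eq(\mathfrak g,\mathcal E)$: variables $f_C$, equations $\sum_{C:\,c_j=i}f_C=\sum_{C:\,c_k=i}f_C$ for $1\le i\le m$, $0\le j,k\le n$, each written $aX=bX$ with $X=(f_{C_1},\dots,f_{C_\ell})^t$ and $a,b\in\{0,1\}^\ell$ the indicator vectors of the configurations on each side. A subsystem is a finite list (repetitions allowed, sides may be interchanged) of such equations. For a permutation matrix $P$ with rows $P_1,\dots,P_p$, $P^+$ denotes the matrix with rows $P_2,\dots,P_p,P_1$. Tarski number: a complete paradoxical decomposition of $G$ is a partition $\{A_1,\dots,A_r,B_1,\dots,B_s\}$ of $G$ with elements $a_i,b_j\in G$ such that $\{a_iA_i\}$ and $\{b_jB_j\}$ are each partitions of $G$; $\tau(G)$ is the minimum of $r+s$ over all such ($\infty$ if none). *)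

From HB Require Import structures.
From mathcomp Require Import all_boot all_order all_algebra all_fingroup.
Set Implicit Arguments. Unset Strict Implicit. Unset Printing Implicit Defensive.
Import GRing.Theory Num.Theory.

Definition is_group (G : Type) (mul : G -> G -> G) (one : G) (inv : G -> G)
  : Prop :=
  [/\ forall x y z, mul x (mul y z) = mul (mul x y) z,
      forall x, mul one x = x &
      forall x, mul (inv x) x = one].

(* The point (x, g_1 x, ..., g_n x), indexed by 'I_n.+1 (index 0 is x). *)
Definition orbit_pt (G : Type) (mul : G -> G -> G) (n : nat)
  (g : 'I_n -> G) (x : G) (j : 'I_n.+1) : G :=
  match unlift ord0 j with
  | None => x
  | Some i => mul (g i) x
  end.

(* C = (c_0,...,c_n) is a configuration of (g, E), where the partition
   E = {E_1..E_m} is given by the block-index map E : G -> 'I_m. *)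
Definition is_config (G : Type) (mul : G -> G -> G) (n m : nat)
  (g : 'I_n -> G) (E : G -> 'I_m) (C : {ffun 'I_n.+1 -> 'I_m}) : Prop :=
  exists x : G, forall j, E (orbit_pt mul g x j) = C j.

(* Indicator vector (over the enumeration Cs = (C_1..C_l) of Con(g,E))
   of the configurations C with c_j = i. *)
Definition ind_row (n m l : nat) (Cs : 'I_l -> {ffun 'I_n.+1 -> 'I_m})
  (j : 'I_n.+1) (i : 'I_m) : 'I_l -> int :=
  fun k => ((Cs k j == i)%:R)%R.

(* Complete paradoxical decomposition with r + s <= N, i.e. tau(G) <= N.
   The partition {A_1..A_r, B_1..B_s} of G is given by the label map D. *)
Definition tarski_le (G : Type) (mul : G -> G -> G) (N : nat) : Prop :=
  exists (r s : nat) (D : G -> 'I_r + 'I_s) (a : 'I_r -> G) (b : 'I_s -> G),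
    [/\ (r + s <= N)%N,
        (forall y : G, exists! i : 'I_r, exists x, D x = inl i /\ mul (a i) x = y) &
        (forall y : G, exists! j : 'I_s, exists x, D x = inr j /\ mul (b j) x = y)].

From HB Require Import structures.
From mathcomp Require Import all_boot all_order all_algebra all_fingroup.
Import GRing.Theory Num.Theory.
Set Implicit Arguments. Unset Strict Implicit. Unset Printing Implicit Defensive.

(* Put a_i := A_(pi i) and b_i := B_(pi i), and let f x be the configuration
   of x.  Each equation A_t X = B_t X compares c_j = i with c_k = i, so some
   translation h_t satisfies A_t (f x) = B_t (f (h_t x)); the hypothesis on
   PB - P^+A says a_(i+1) <= b_i.  Starting from x with a_0 (f x), follow the
   chain x, h_0 x, h_1 h_0 x, ... while it stays in a_1, a_2, ...; it leaves
   at an exit: an index i and a point y with b_i (f y) and not a_(i+1) (f y).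
   Starting points and exits correspond bijectively, and telescoping
   sum_i (b_i - a_i) = 1 shows that every configuration c has exactly
   a_0 c + 1 exits.  Grouping the starting points by the configuration of
   their exit point and by whether the exit is the first or the second exit
   of that configuration, and translating each group onto its exit points,
   tiles G once with l pieces (first exits) and once with |A_(pi 1)| pieces
   (second exits) plus the complement of a_0, left in place. *)

Lemma is_group_mulV (G : Type) (mul : G -> G -> G) (one : G) (inv : G -> G) :
  is_group mul one inv -> forall x, mul x (inv x) = one.
Proof.
case=> mulA mul1g mulVg x.
have -> : mul x (inv x) = mul (mul (inv (inv x)) (inv x)) (mul x (inv x)).
  by rewrite mulVg mul1g.
by rewrite -mulA (mulA (inv x) x) mulVg mul1g mulVg.
Qed.

Lemma tarski_le_fin (G : Type) (mul : G -> G -> G) (N : nat) (I J : finType)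
  (D : G -> I + J) (a : I -> G) (b : J -> G) :
  (#|I| + #|J| <= N)%N ->
  (forall y, exists! i, exists x, D x = inl i /\ mul (a i) x = y) ->
  (forall y, exists! j, exists x, D x = inr j /\ mul (b j) x = y) ->
  tarski_le mul N.
Proof.
move=> le_N tile_a tile_b.
pose D' x := match D x with inl i => inl (enum_rank i) | inr j => inr (enum_rank j) end.
exists #|I|, #|J|, D', (a \o enum_val), (b \o enum_val).
split=> // y;
  [have [i [[x [Dx ax]] uniq_i]] := tile_a y | have [i [[x [Dx ax]] uniq_i]] := tile_b y];
  exists (enum_rank i); (split=> [|i' [x' []]]; first by exists x; rewrite /D' Dx /= enum_rankK);
  rewrite /D'; case Dx': (D x') => [i1|i1] // [<-] /=; rewrite enum_rankK => ax';
  by rewrite (uniq_i i1) //; exists x'.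
Qed.

Section ChainParadox.

Variables (G : Type) (mul : G -> G -> G) (one : G) (inv : G -> G).
Hypothesis HG : is_group mul one inv.

Variables (l P : nat) (f : G -> 'I_l) (a b : nat -> 'I_l -> bool) (h : nat -> G).
Hypothesis a_shift : forall i x, (i < P)%N -> a i (f x) = b i (f (mul (h i) x)).
Hypothesis a_sub_b : forall i c, (i.+1 < P)%N -> a i.+1 c -> b i c.
Hypothesis a_last : forall c, a P c = false.

Definition chain_exit i c := b i c && ~~ a i.+1 c.
Definition chain_exits c := [seq i <- iota 0 P | chain_exit i c].
Hypothesis size_chain_exits : forall c, size (chain_exits c) = (a 0 c).+1.

Fixpoint chain_word i : G := if i is i'.+1 then mul (h i') (chain_word i') else one.

Definition chain_pt x i := mul (chain_word i) x.
Definition chain_in x i := a i (f (chain_pt x i)).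

Lemma chain_pt0 x : chain_pt x 0 = x.
Proof. by case: HG => _ mul1g _; rewrite /chain_pt mul1g. Qed.

Lemma chain_ptS x i : chain_pt x i.+1 = mul (h i) (chain_pt x i).
Proof. by case: HG => mulA _ _; rewrite /chain_pt mulA. Qed.

Lemma chain_in_prev x i : (i.+1 < P)%N -> chain_in x i.+1 -> chain_in x i.
Proof.
move=> ltiP in_i1; rewrite /chain_in a_shift ?(ltnW ltiP) // -chain_ptS.
exact: a_sub_b.
Qed.

Lemma chain_in_below x i j : (i < P)%N -> chain_in x i -> (j <= i)%N -> chain_in x j.
Proof.
elim: i => [|i IH] ltiP in_i; first by rewrite leqn0 => /eqP ->.
rewrite leq_eqVlt ltnS => /orP[/eqP -> // |].
exact: IH (ltnW ltiP) (chain_in_prev ltiP in_i).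
Qed.

Definition exit_time x := find (fun j => ~~ chain_in x j.+1) (iota 0 P).

Lemma P_gt0 : (0 < P)%N.
Proof. by move: (size_chain_exits (f one)); rewrite size_filter; case: (P). Qed.

Lemma exit_timeP x :
  [/\ (exit_time x < P)%N, ~~ chain_in x (exit_time x).+1
    & forall j, (j < exit_time x)%N -> chain_in x j.+1].
Proof.
have has_exit : has (fun j => ~~ chain_in x j.+1) (iota 0 P).
  apply/hasP; exists P.-1; first by rewrite mem_iota add0n prednK ?leqnn ?P_gt0.
  by rewrite /chain_in prednK ?a_last ?P_gt0.
have lt_exit : (exit_time x < P)%N by rewrite -[P in (_ < P)%N](size_iota 0) -has_find.
split=> // [|j ltj].
  by have := nth_find 0 has_exit; rewrite nth_iota.
by have := before_find 0 ltj; rewrite nth_iota ?(ltn_trans ltj) // add0n => /negbFE.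
Qed.

Lemma exit_time_unique x i :
  (i < P)%N -> ~~ chain_in x i.+1 -> (forall j, (j < i)%N -> chain_in x j.+1) ->
  exit_time x = i.
Proof.
move=> ltiP out_i in_below; have [_ out_e in_e] := exit_timeP x.
case: (ltngtP (exit_time x) i) => // [/in_below | /in_e].
  by rewrite (negbTE out_e).
by rewrite (negbTE out_i).
Qed.

Lemma exit_timeP_iff x i y : (i < P)%N ->
  (chain_in x 0 /\ exit_time x = i /\ chain_pt x i.+1 = y) <->
  (chain_exit i (f y) /\ x = mul (inv (chain_word i.+1)) y).
Proof.
have [mulA mul1g mulVg] := HG; move=> ltiP; split=> [[in0 [<- <-]] | [exit_y ->]].
  have [lt_e out_e in_e] := exit_timeP x; split; last by rewrite /chain_pt mulA mulVg mul1g.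
  apply/andP; split=> //; rewrite chain_ptS -a_shift //.
  by case: (exit_time x) in_e => // e /(_ e (ltnSn e)).
set x' := mul _ y; have /andP[b_y out_y] := exit_y.
have y_pt : chain_pt x' i.+1 = y by rewrite /chain_pt mulA (is_group_mulV HG) mul1g.
have in_i : chain_in x' i by rewrite /chain_in a_shift // -chain_ptS y_pt.
split; first exact: chain_in_below in_i _.
split=> //; apply: exit_time_unique => // [|j ltji]; first by rewrite /chain_in y_pt.
exact: chain_in_below in_i _.
Qed.

Definition exit_pt x := chain_pt x (exit_time x).+1.

Lemma mem_chain_exits i c : (i \in chain_exits c) = (i < P)%N && chain_exit i c.
Proof. by rewrite mem_filter mem_iota add0n andbC. Qed.

Lemma exit_time_mem x : chain_in x 0 -> exit_time x \in chain_exits (f (exit_pt x)).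
Proof.
move=> in0; have [lt_e _ _] := exit_timeP x.
by rewrite mem_chain_exits lt_e; have [] := (exit_timeP_iff x (exit_pt x) lt_e).1.
Qed.

Definition piece x : 'I_l + option {c | a 0 c} :=
  if chain_in x 0 then
    let c := f (exit_pt x) in
    if index (exit_time x) (chain_exits c) == 0 then inl c else inr (insub c)
  else inr None.

Definition left_shift c := chain_word (nth 0 (chain_exits c) 0).+1.

Definition right_shift (o : option {c | a 0 c}) :=
  if o is Some c then chain_word (nth 0 (chain_exits (val c)) 1).+1 else one.

Lemma piece_inl x c : piece x = inl c -> c = f (mul (left_shift c) x).
Proof.
rewrite /piece; case: ifP => // in0; case: eqP => // rank0 [<-].
by rewrite /left_shift -rank0 nth_index ?exit_time_mem.
Qed.

Lemma piece_inr x o : piece x = inr o -> o = insub (f (mul (right_shift o) x)).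
Proof.
have [_ mul1g _] := HG; rewrite /piece; case: ifP => in0; last first.
  by move=> [<-]; rewrite mul1g insubF // -(chain_pt0 x).
case: eqP => // rank_gt0 [<-].
have := exit_time_mem in0; rewrite -index_mem size_chain_exits.
case: (boolP (a 0 _)) => [a0 | _]; last by rewrite ltnS leqn0 => /eqP.
rewrite (insubT _ a0) /right_shift SubK ltnS => le1.
have rank1 : index (exit_time x) (chain_exits (f (exit_pt x))) = 1.
  by case: index rank_gt0 le1 => [|[|]].
by rewrite -rank1 nth_index ?exit_time_mem // (insubT _ a0).
Qed.

Lemma exit_pt_onto i y : i \in chain_exits (f y) ->
  exists x, [/\ chain_in x 0, exit_time x = i & exit_pt x = y].
Proof.
rewrite mem_chain_exits => /andP[ltiP exit_i].
have [in0 [e_i pt_y]] := (exit_timeP_iff _ y ltiP).2 (conj exit_i erefl).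
by exists (mul (inv (chain_word i.+1)) y); rewrite /exit_pt e_i.
Qed.

Lemma index_chain_exits c k : (k <= a 0 c)%N ->
  index (nth 0 (chain_exits c) k) (chain_exits c) = k.
Proof. by move=> le_k; rewrite index_uniq ?size_chain_exits ?filter_uniq ?iota_uniq. Qed.

Lemma piece_inl_onto y : exists x, piece x = inl (f y) /\ mul (left_shift (f y)) x = y.
Proof.
have [|x [in0 e_x pt_x]] := @exit_pt_onto (nth 0 (chain_exits (f y)) 0) y.
  by rewrite mem_nth ?size_chain_exits.
exists x; rewrite /piece in0 pt_x e_x index_chain_exits //; split=> //.
by rewrite /left_shift -e_x.
Qed.

Lemma piece_inr_onto y :
  exists x, piece x = inr (insub (f y)) /\ mul (right_shift (insub (f y))) x = y.
Proof.
have [_ mul1g _] := HG; case: (boolP (a 0 (f y))) => [a0 | not_a0]; last first.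
  have out0 : chain_in y 0 = false by rewrite /chain_in chain_pt0 (negbTE not_a0).
  by exists y; rewrite /piece out0 insubF ?(negbTE not_a0) // mul1g.
have [|x [in0 e_x pt_x]] := @exit_pt_onto (nth 0 (chain_exits (f y)) 1) y.
  by rewrite mem_nth ?size_chain_exits ?a0.
exists x; rewrite /piece in0 pt_x e_x index_chain_exits ?a0 // (insubT _ a0); split=> //.
by rewrite /right_shift SubK -e_x.
Qed.

Lemma chain_paradox : tarski_le mul (1 + #|[set c | a 0 c]| + l).
Proof.
apply: (tarski_le_fin (D := piece) (a := left_shift) (b := right_shift)).
- by rewrite card_ord card_option card_sig cardsE addnC add1n.
- move=> y; exists (f y); split; first by have [x []] := piece_inl_onto y; exists x.
  by move=> c [x [/piece_inl/esym c_eq <-]].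
- move=> y; exists (insub (f y)); split; first by have [x []] := piece_inr_onto y; exists x.
  by move=> o [x [/piece_inr/esym o_eq <-]].
Qed.

End ChainParadox.

Lemma count_exits_telescope (P : nat) (a b : nat -> bool) :
  a P = false -> (forall i, (i.+1 < P)%N -> a i.+1 -> b i) ->
  (\sum_(0 <= i < P) ((b i)%:R - (a i)%:R) = 1 :> int)%R ->
  count (fun i => b i && ~~ a i.+1) (iota 0 P) = (a 0).+1.
Proof.
move=> aP ab sum_ba; apply/eqP; rewrite -(eqr_nat int) -sum1_count big_mkcond /=.
have exit_diff i : (i < P)%N ->
    (((b i && ~~ a i.+1) : nat)%:R = (b i)%:R - (a i.+1)%:R :> int)%R.
  move=> ltiP; case: (boolP (a i.+1)) => [ai1 | _]; last by rewrite andbT subr0.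
  have lti1P : (i.+1 < P)%N.
    by rewrite ltn_neqAle ltiP andbT; apply: contraTneq ai1 => ->; rewrite aP.
  by rewrite ab.
have shift_a : (\sum_(0 <= i < P) (a i.+1)%:R =
                \sum_(0 <= i < P) (a i)%:R - (a 0%N)%:R :> int)%R.
  apply/eqP; rewrite eq_sym subr_eq; apply/eqP.
  by rewrite addrC -(big_nat_recl P 0 (fun i => (a i)%:R : int)%R) // big_nat_recr //= aP addr0.
have -> : iota 0 P = index_iota 0 P by rewrite /index_iota subn0.
rewrite natr_sum.
rewrite (eq_big_nat _ _ (F2 := fun i => (b i)%:R - (a i.+1)%:R)%R); last first.
  by move=> i /andP[_ ltiP]; rewrite -exit_diff.
by rewrite sumrB shift_a opprB addrA addrAC -sumrB sum_ba addrC natr1.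
Qed.

Section Configurations.

Variables (G : Type) (mul : G -> G -> G) (one : G) (inv : G -> G).
Hypothesis HG : is_group mul one inv.
Variables (n m l : nat) (g : 'I_n -> G) (E : G -> 'I_m).
Variable Cs : 'I_l -> {ffun 'I_n.+1 -> 'I_m}.

Definition config_of x : {ffun 'I_n.+1 -> 'I_m} := [ffun j => E (orbit_pt mul g x j)].

Lemma exists_config_index :
  (forall C, is_config mul g E C <-> exists k, Cs k = C) ->
  exists f : G -> 'I_l, forall x, Cs (f x) = config_of x.
Proof.
move=> HCs; have ex_k x : exists k, Cs k == config_of x.
  by have [|k <-] := (HCs (config_of x)).1; [exists x => j; rewrite ffunE | exists k].
by exists (fun x => xchoose (ex_k x)) => x; apply/eqP/(xchooseP (ex_k x)).
Qed.

Definition orbit_elt (j : 'I_n.+1) : G := if unlift ord0 j is Some i then g i else one.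

Lemma orbit_ptE x j : orbit_pt mul g x j = mul (orbit_elt j) x.
Proof. by case: HG => _ mul1g _; rewrite /orbit_pt /orbit_elt; case: unlift. Qed.

Lemma ind_row_eq1 j i c : ind_row Cs j i c = (ind_row Cs j i c == 1%R)%:R%R.
Proof. by rewrite /ind_row; case: (_ == _). Qed.

Lemma ind_row_translate (f : G -> 'I_l) j k i :
  (forall x, Cs (f x) = config_of x) ->
  exists h, forall x, ind_row Cs j i (f x) = ind_row Cs k i (f (mul h x)).
Proof.
have [mulA mul1g _] := HG; move=> f_config.
exists (mul (inv (orbit_elt k)) (orbit_elt j)) => x.
by rewrite /ind_row !f_config !ffunE !orbit_ptE !mulA (is_group_mulV HG) mul1g.
Qed.

End Configurations.

Lemma permuted_rows_paradox (G : Type) (mul : G -> G -> G) (one : G) (inv : G -> G)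
  (HG : is_group mul one inv) (l p : nat) (f : G -> 'I_l) (A B : 'M[int]_(p, l))
  (h : 'I_p -> G) (pi : 'S_p) (i0 : 'I_p) :
  (forall t c, A t c = (A t c == 1%R)%:R%R) -> (forall t c, B t c = (B t c == 1%R)%:R%R) ->
  (forall t x, A t (f x) = B t (f (mul (h t) x))) ->
  (forall c, \sum_(t < p) (B t c - A t c) = 1)%R ->
  (forall (i : 'I_p) (lt_i1p : (i.+1 < p)%N) c,
     0 <= B (pi i) c - A (pi (Ordinal lt_i1p)) c)%R ->
  nat_of_ord i0 = 0%N ->
  tarski_le mul (1 + #|[set c | A (pi i0) c == 1%R]| + l).
Proof.
move=> A01 B01 row_shift sum_BA Hperm i0_0.
pose a i c := if insub i is Some t then A (pi t) c == 1%R else false.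
pose b i c := if insub i is Some t then B (pi t) c == 1%R else false.
have a_ord (t : 'I_p) c : a t c = (A (pi t) c == 1%R) by rewrite /a valK.
have b_ord (t : 'I_p) c : b t c = (B (pi t) c == 1%R) by rewrite /b valK.
have -> : [set c | A (pi i0) c == 1%R] = [set c | a 0 c].
  by apply/setP => c; rewrite !inE -i0_0 a_ord.
have a_sub_b i c : (i.+1 < p)%N -> a i.+1 c -> b i c.
  move=> lt_i1p; have lt_ip := ltnW lt_i1p.
  rewrite -[i]/(val (Ordinal lt_ip)) -[i.+1]/(val (Ordinal lt_i1p)) a_ord b_ord => /eqP A1.
  by have := Hperm (Ordinal lt_ip) lt_i1p c; rewrite A1 B01 subr_ge0; case: (_ == _).
apply: (chain_paradox HG (P := p) (f := f) (a := a) (b := b)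
  (h := fun i => if insub i is Some t then h (pi t) else one)) => //.
- by move=> i x lt_ip; rewrite /a /b; case: insubP => [t _ _ | /negP //]; rewrite row_shift.
- by move=> c; rewrite /a insubF ?ltnn.
move=> c; rewrite size_filter; apply: (count_exits_telescope (a := a^~ c) (b := b^~ c)).
- by rewrite /a insubF ?ltnn.
- by move=> i; apply: a_sub_b.
apply: etrans (sum_BA c); rewrite big_mkord [RHS](reindex_inj (@perm_inj _ pi)).
by apply: eq_bigr => t _; rewrite a_ord b_ord -A01 -B01.
Qed.

Theorem theorem4p5
  (G : Type) (mul : G -> G -> G) (one : G) (inv : G -> G)
  (HG : is_group mul one inv)
  (n : nat) (g : 'I_n -> G)
  (m : nat) (E : G -> 'I_m) (HE : forall i : 'I_m, exists x, E x = i)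
  (l : nat) (Cs : 'I_l -> {ffun 'I_n.+1 -> 'I_m})
  (HCs_inj : injective Cs)
  (HCs : forall C, is_config mul g E C <-> exists k, Cs k = C)
  (p : nat) (A B : 'M[int]_(p, l))
  (Hsub : forall t : 'I_p, exists (i : 'I_m) (j k : 'I_n.+1),
      forall c : 'I_l, A t c = ind_row Cs j i c /\ B t c = ind_row Cs k i c)
  (Hsum : forall c : 'I_l, (\sum_(t < p) (B t c - A t c) = 1)%R)
  (pi : 'S_p)
  (Hperm : forall (i : 'I_p) (h : (i.+1 < p)%N) (c : 'I_l),
      (0 <= B (pi i) c - A (pi (Ordinal h)) c)%R) :
  forall i0 : 'I_p, nat_of_ord i0 = 0%N ->
    tarski_le mul (1 + #|[set c | A (pi i0) c == 1%R]| + l).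
Proof.
move=> i0 i0_0; have [f f_config] := exists_config_index HCs.
have row_translate t : exists h, forall x, A t (f x) = B t (f (mul h x)).
  have [i [j [k row_t]]] := Hsub t; have [h Hh] := ind_row_translate HG j k i f_config.
  by exists h => x; rewrite (row_t _).1 (row_t _).2.
have [h row_shift] := fin_all_exists row_translate.
apply: (permuted_rows_paradox HG (h := h) _ _ row_shift Hsum Hperm i0_0) => t c.
  by have [i [j [k row_t]]] := Hsub t; rewrite (row_t c).1 -ind_row_eq1.
by have [i [j [k row_t]]] := Hsub t; rewrite (row_t c).2 -ind_row_eq1.
Qed.
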